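(* Let $(\Omega,d)$ be a compact metric space, $J \subset \mathbb{R}$ an open interval and $\pi_\lambda \colon \Omega \to \mathbb{R}$, $\lambda \in J$, continuous maps, smooth in $\lambda$, satisfying transversality and regularity of order $\tau \in [0,1)$ (defined below). Fix $x,y \in \Omega$ with $x \neq y$, write $r = d(x,y)$ and $\Phi_\lambda = \Phi_\lambda(x,y)$, and let $I$ be a compact subinterval of $J$. The set $\{\lambda \in \operatorname{int} I : |\Phi_{\lambda}| < \delta_{I,\tau}r^{\tau}\}$ can be written as a countable union of disjoint maximal open intervals $I_{1},I_{2},\ldots \subset I$, and: (i) $\mathcal{L}^{1}(I_{j}) \leq 2$ for all $j$; furthermore, if $I_{j}$ and $I$ have no common boundary point, then $r^{2\tau} \lesssim_{I,\tau} \mathcal{L}^{1}(I_{j})$. Consequently there are only finitely many intervals $I_{j}$. (ii) There exist points $\lambda_{j} \in \bar{I}_{j}$ such that for all $\lambda \in \bar{I}_{j}$, $|\Phi_{\lambda}| \geq |\Phi_{\lambda_{j}}|$ and $|\Phi_{\lambda}| \geq \delta_{I,\tau}r^{\tau}|\lambda - \lambda_{j}|$. Furthermore, there exists a constant $\varepsilon > 0$, depending only on $I$ and $\tau$ (and the family), such that: (a) if $\lambda \in I_{j}$ and $|\Phi_{\lambda}| \leq \delta_{I,\tau}r^{\tau}/2$, then $(\lambda - \varepsilon r^{2\tau},\lambda + \varepsilon r^{2\tau}) \cap I \subset I_{j}$; and (b) if $|\Phi_{\lambda_{j}}| \geq \delta_{I,\tau}r^{\tau}/2$, then $|\Phi_{\lambda}|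 \geq \delta_{I,\tau}r^{\tau}/2$ for all $\lambda \in (\lambda_{j} - \varepsilon r^{2\tau}, \lambda_{j} + \varepsilon r^{2\tau}) \cap I$.
   Context: $\Phi_{\lambda}(x,y) := (\pi_{\lambda}(x) - \pi_{\lambda}(y))/d(x,y)$ for $x \neq y$. Transversality of order $\tau$: for every compact $I \subset J$ there is $\delta_{I,\tau} > 0$ with $|\Phi_{\lambda}(x,y)| \leq \delta_{I,\tau}d(x,y)^{\tau} \Rightarrow |\partial_{\lambda}\Phi_{\lambda}(x,y)| \geq \delta_{I,\tau}d(x,y)^{\tau}$ for all $\lambda \in I$, $x,y \in \Omega$; $\delta_{I,\tau}$ in the statement is this constant. Regularity of order $\tau$: for every compact $I \subset J$ and integer $l \geq 0$ there is $C_{I,l,\tau}$ with $|\partial_{\lambda}^{l}\Phi_{\lambda}(x,y)| \leq C_{I,l,\tau}d(x,y)^{-l\tau}$ for all $\lambda \in I$, $x,y$. $\mathcal{L}^1$ is Lebesgue measure; $A \lesssim_{I,\tau} B$ means $A \leq CB$ with $C$ depending only on $I,\tau$ (and the constants of the family). *)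

From Stdlib Require Import Reals Lra List.
From Stdlib Require Rtopology.
From Coquelicot Require Import Coquelicot.
Open Scope R_scope.

Definition is_metric {Omega : Type} (d : Omega -> Omega -> R) : Prop :=
  (forall x y, 0 <= d x y) /\
  (forall x y, d x y = 0 <-> x = y) /\
  (forall x y, d x y = d y x) /\
  (forall x y z, d x z <= d x y + d y z).

Definition metric_open {Omega : Type} (d : Omega -> Omega -> R) (U : Omega -> Prop) : Prop :=
  forall x, U x -> exists eps, 0 < eps /\ forall y, d x y < eps -> U y.

Definition metric_compact {Omega : Type} (d : Omega -> Omega -> R) : Prop :=
  forall (Idx : Type) (U : Idx -> Omega -> Prop),
    (forall i, metric_open d (U i)) ->
    (forall x, exists i, U i x) ->
    exists l : list Idx, forall x, exists i, In i l /\ U i x.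

Definition inJ (ja jb : Rbar) (l : R) : Prop :=
  Rbar_lt ja (Finite l) /\ Rbar_lt (Finite l) jb.

Definition Phi {Omega : Type} (d : Omega -> Omega -> R) (pi : R -> Omega -> R)
  (l : R) (x y : Omega) : R := (pi l x - pi l y) / d x y.

Definition cont_in_x {Omega : Type} (d : Omega -> Omega -> R) (pi : R -> Omega -> R)
  (ja jb : Rbar) : Prop :=
  forall l, inJ ja jb l -> forall x eps, 0 < eps ->
    exists del, 0 < del /\ forall y, d x y < del -> Rabs (pi l x - pi l y) < eps.

Definition smooth_in_lambda {Omega : Type} (pi : R -> Omega -> R) (ja jb : Rbar) : Prop :=
  forall x l, inJ ja jb l -> forall n, ex_derive_n (fun t => pi t x) n l.

Definition cpt_sub (ja jb : Rbar) (K : R -> Prop) : Prop :=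
  Rtopology.compact K /\ forall l, K l -> inJ ja jb l.

Definition transversal_const {Omega : Type} (d : Omega -> Omega -> R) (pi : R -> Omega -> R)
  (tau : R) (K : R -> Prop) (delta : R) : Prop :=
  0 < delta /\
  forall l x y, K l -> x <> y ->
    Rabs (Phi d pi l x y) <= delta * Rpower (d x y) tau ->
    Rabs (Derive (fun t => Phi d pi t x y) l) >= delta * Rpower (d x y) tau.

Definition transversal {Omega : Type} (d : Omega -> Omega -> R) (pi : R -> Omega -> R)
  (ja jb : Rbar) (tau : R) : Prop :=
  forall K, cpt_sub ja jb K -> exists delta, transversal_const d pi tau K delta.

Definition regular {Omega : Type} (d : Omega -> Omega -> R) (pi : R -> Omega -> R)
  (ja jb : Rbar) (tau : R) : Prop :=
  forall K, cpt_sub ja jb K -> forall n : nat, exists C, forall l x y, K l -> x <> y ->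
    Rabs (Derive_n (fun t => Phi d pi t x y) n l) <= C * Rpower (d x y) (- INR n * tau).

Definition max_open_interval (S : R -> Prop) (a b : R) : Prop :=
  a < b /\ (forall t, a < t < b -> S t) /\
  (forall a' b', (forall t, a' < t < b' -> S t) -> a' <= a -> b <= b' -> a' = a /\ b' = b).

From Stdlib Require Import Reals Lra Lia List Classical.
From Stdlib Require Rtopology Ranalysis5.
From Coquelicot Require Import Coquelicot.
Open Scope R_scope.

(* Write [k = delta r^tau] and [f l = Phi_l(x, y)]. Transversality gives [|f'| >= k]
   wherever [|f| <= k], and regularity of order 1 bounds [|f'|] by [D = C r^-tau].
   On the closure of a maximal interval [(a, b)] of [{|f| < k}] the mean value
   theorem gives [|f u - f v| >= k |u - v|], hence [b - a <= 2]. At an endpoint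
   interior to [I] we have [|f| = k]; as [f b <> f a], [f] runs from [k] to [-k] or
   back, so [D (b - a) >= 2 k]: the intervals avoiding the ends of [I] have length at
   least [k / D], and there are finitely many. Around the minimum point [lj] of [|f|]
   on [[a, b]] the sign of [f] cannot change, so [|f l| >= k |l - lj|]; the Lipschitz
   bound [D] gives (a) and (b) with [eps r^(2 tau) = k / (2 D)]. *)

Lemma segment_sub c e u v t : c <= u <= e -> c <= v <= e ->
  Rmin u v <= t <= Rmax u v -> c <= t <= e.
Proof. unfold Rmin, Rmax; destruct Rle_dec; lra. Qed.

Lemma continuity_pt_ball (g : R -> R) t eps : continuity_pt g t -> 0 < eps ->
  exists eta, 0 < eta /\ forall u, Rabs (u - t) < eta -> Rabs (g u - g t) < eps.
Proof.
  intros Hg Heps. destruct (Hg eps Heps) as [eta [Heta Hnear]].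
  exists eta. split; [exact Heta|]. intros u Hu. destruct (Req_dec u t) as [->|Hne].
  - unfold Rminus. rewrite Rplus_opp_r, Rabs_R0. exact Heps.
  - apply (Hnear u). split; [split; [exact I | congruence] | exact Hu].
Qed.

Lemma le_on_closed_interval (g : R -> R) a b k : a < b ->
  (forall t, a <= t <= b -> continuity_pt g t) ->
  (forall t, a < t < b -> g t <= k) -> forall t, a <= t <= b -> g t <= k.
Proof.
  intros Hab Hg Hk t Ht. apply Rnot_lt_le; intros Hgt.
  destruct (continuity_pt_ball g t (g t - k) (Hg t Ht)) as [eta [Heta Hnear]]; [lra|].
  set (s := Rmin eta (b - a) / 4).
  assert (Hs : 0 < s /\ s < eta /\ s <= (b - a) / 4).
  { unfold s; pose proof (Rmin_l eta (b - a)); pose proof (Rmin_r eta (b - a)).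
    assert (0 < Rmin eta (b - a)) by (apply Rmin_glb_lt; lra). lra. }
  set (u := if Rlt_dec t ((a + b) / 2) then t + s else t - s).
  assert (Hu : a < u < b /\ Rabs (u - t) < eta).
  { unfold u; destruct Rlt_dec; repeat split; try lra;
      [rewrite Rabs_right | rewrite Rabs_left]; lra. }
  pose proof (Rabs_def2 _ _ (Hnear u (proj2 Hu))). pose proof (Hk u (proj1 Hu)). lra.
Qed.

Lemma root_of_sign_change (g : R -> R) u v : u <= v ->
  (forall t, u <= t <= v -> continuity_pt g t) -> g u * g v <= 0 ->
  exists z, u <= z <= v /\ g z = 0.
Proof.
  intros Huv Hg Hsign.
  destruct (Req_dec (g u) 0) as [Hu0|Hu0]; [exists u; split; [lra|exact Hu0]|].
  destruct (Req_dec (g v) 0) as [Hv0|Hv0]; [exists v; split; [lra|exact Hv0]|].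
  destruct (Rlt_dec (g u) 0) as [Hneg|Hpos].
  - assert (Hv : 0 < g v) by nra.
    assert (Hlt : u < v) by (destruct (Req_dec u v) as [<-|]; lra).
    destruct (Ranalysis5.IVT_interv g u v Hg Hlt Hneg Hv) as [z Hz]. eauto.
  - assert (Hu : 0 < g u) by lra. assert (Hv : g v < 0) by nra.
    assert (Hlt : u < v) by (destruct (Req_dec u v) as [<-|]; lra).
    destruct (Ranalysis5.IVT_interv (fun t => - g t) u v) as [z [Hz Ez]];
      [intros t Ht; apply continuity_pt_opp, Hg, Ht | exact Hlt | lra | lra |].
    exists z; split; [exact Hz | lra].
Qed.

Lemma list_of_subsingleton {T : Type} (P : T -> Prop) :
  (forall p q, P p -> P q -> p = q) -> exists L, forall p, P p -> In p L.
Proof.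
  intros Huniq. destruct (classic (exists p, P p)) as [[p0 Hp0]|Hnone].
  - exists (p0 :: nil). intros p Hp. left. exact (Huniq _ _ Hp0 Hp).
  - exists nil. intros p Hp. exfalso. eauto.
Qed.

Lemma list_of_finite_union {T : Type} (P : nat -> T -> Prop) N :
  (forall n, exists L, forall p, P n p -> In p L) ->
  exists L, forall n p, (n < N)%nat -> P n p -> In p L.
Proof.
  intros HP. induction N as [|N [L HL]].
  - exists nil. intros n p Hn. lia.
  - destruct (HP N) as [L' HL']. exists (L ++ L'). intros n p Hn Hp.
    apply in_or_app. destruct (Nat.eq_dec n N) as [->|Hne].
    + right. exact (HL' p Hp).
    + left. apply (HL n); [lia | exact Hp].
Qed.

Lemma grid_point_between c h a b : 0 < h -> c <= a -> h < b - a ->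
  exists n : nat, a < c + INR n * h < b.
Proof.
  intros Hh Hca Hlen.
  destruct (nfloor_ex ((a - c) / h)) as [n [Hlo Hhi]]; [apply Rdiv_le_0_compat; lra|].
  apply Rle_div_r in Hlo; [|lra]. apply Rlt_div_l in Hhi; [|lra].
  exists (S n). rewrite S_INR. split; nra.
Qed.

Lemma open_set_ball (U : R -> Prop) t : Rtopology.open_set U -> U t ->
  exists eta, 0 < eta /\ forall u, Rabs (u - t) < eta -> U u.
Proof.
  intros HU Ht. destruct (HU t Ht) as [eta Heta].
  exists eta. split; [apply cond_pos | exact Heta].
Qed.

Lemma open_set_of_ball (U : R -> Prop) :
  (forall t, U t -> exists eta, 0 < eta /\ forall u, Rabs (u - t) < eta -> U u) ->
  Rtopology.open_set U.
Proof.
  intros HU t Ht. destruct (HU t Ht) as [eta [Heta Hball]].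
  exists (mkposreal eta Heta). exact Hball.
Qed.

Lemma open_set_opp (U : R -> Prop) :
  Rtopology.open_set U -> Rtopology.open_set (fun t => U (- t)).
Proof.
  intros HU t Ht. destruct (HU _ Ht) as [eta Heta].
  exists eta. intros u Hu. apply Heta. unfold Rtopology.disc in *.
  rewrite <- Rabs_Ropp. replace (- (- u - - t)) with (u - t) by ring. exact Hu.
Qed.

Lemma open_set_right_exit (U : R -> Prop) M l : Rtopology.open_set U ->
  (forall t, U t -> t < M) -> U l ->
  exists b, l < b /\ (forall t, l <= t < b -> U t) /\ ~ U b.
Proof.
  intros HU HM Hl.
  set (E := fun t => forall u, l <= u <= t -> U u).
  destruct (completeness E) as [b [Hub Hlub]].
  { exists M. intros t Ht. destruct (Rle_dec l t).
    - apply Rlt_le, HM, Ht. lra.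
    - pose proof (HM l Hl). lra. }
  { exists l. intros u Hu. replace u with l by lra. exact Hl. }
  assert (Hbelow : forall t, l <= t < b -> U t).
  { intros t Ht. destruct (classic (exists t', E t' /\ t <= t')) as [[t' [Ht' Htt']]|Hnone].
    - apply Ht'. lra.
    - enough (b <= t) by lra. apply Hlub. intros t' Ht'. apply Rnot_lt_le. intros Hlt.
      apply Hnone. exists t'. split; [exact Ht' | lra]. }
  destruct (open_set_ball U l HU Hl) as [eta [Heta Hball]].
  assert (l + eta / 2 <= b) by (apply Hub; intros u Hu; apply Hball, Rabs_def1; lra).
  exists b. split; [lra|]. split; [exact Hbelow|]. intros Hb.
  destruct (open_set_ball U b HU Hb) as [eta' [Heta' Hball']].
  assert (b + eta' / 2 <= b); [|lra].
  apply Hub. intros u Hu. destruct (Rlt_dec u b).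
  - apply Hbelow. lra.
  - apply Hball', Rabs_def1; lra.
Qed.

Lemma max_open_interval_of_open (U : R -> Prop) c e : Rtopology.open_set U ->
  (forall t, U t -> c < t < e) ->
  forall l, U l -> exists a b, max_open_interval U a b /\ a < l < b.
Proof.
  intros HU Hce l Hl.
  destruct (open_set_right_exit U e l HU) as [b [Hlb [Hright Hb]]];
    [intros t Ht; apply (Hce t Ht) | exact Hl |].
  destruct (open_set_right_exit (fun t => U (- t)) (- c) (- l) (open_set_opp U HU))
    as [a [Hla [Hleft Ha]]];
    [intros t Ht; pose proof (Hce _ Ht); lra | rewrite Ropp_involutive; exact Hl |].
  cbv beta in Ha.
  assert (Hin : forall t, - a < t < b -> U t).
  { intros t Ht. destruct (Rle_dec l t); [apply Hright; lra|].
    rewrite <- (Ropp_involutive t). apply Hleft. lra. }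
  exists (- a), b. split; [|lra]. split; [lra|]. split; [exact Hin|].
  intros a' b' Hin' Ha' Hb'. split.
  - apply Rle_antisym; [exact Ha'|]. apply Rnot_lt_le. intros Hlt. apply Ha, Hin'. lra.
  - apply Rle_antisym; [|exact Hb']. apply Rnot_lt_le. intros Hlt. apply Hb, Hin'. lra.
Qed.

Section MaximalIntervals.

Variable A : R -> Prop.

Lemma max_open_interval_eq a b a' b' t :
  max_open_interval A a b -> max_open_interval A a' b' ->
  a < t < b -> a' < t < b' -> a = a' /\ b = b'.
Proof.
  intros [Hab [HA Hmax]] [Hab' [HA' Hmax']] Ht Ht'.
  assert (Hunion : forall u, Rmin a a' < u < Rmax b b' -> A u).
  { intros u Hu. destruct (Rlt_dec u t);
      [destruct (Rlt_dec a u) | destruct (Rlt_dec u b)];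
      try (apply HA; lra); apply HA';
      revert Hu; unfold Rmin, Rmax; repeat destruct Rle_dec; lra. }
  destruct (Hmax _ _ Hunion (Rmin_l _ _) (Rmax_l _ _)).
  destruct (Hmax' _ _ Hunion (Rmin_r _ _) (Rmax_r _ _)).
  split; congruence.
Qed.

Lemma max_open_interval_eq_left a b b' :
  max_open_interval A a b -> max_open_interval A a b' -> b = b'.
Proof.
  intros H H'. pose proof (proj1 H). pose proof (proj1 H').
  apply (max_open_interval_eq a b a b' (a + Rmin (b - a) (b' - a) / 2) H H');
    unfold Rmin; destruct Rle_dec; lra.
Qed.

Lemma max_open_interval_eq_right a a' b :
  max_open_interval A a b -> max_open_interval A a' b -> a = a'.
Proof.
  intros H H'. pose proof (proj1 H). pose proof (proj1 H').
  apply (max_open_interval_eq a b a' b (b - Rmin (b - a) (b - a') / 2) H H');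
    unfold Rmin; destruct Rle_dec; lra.
Qed.

Lemma max_open_interval_bounds c e a b : (forall t, A t -> c < t < e) ->
  max_open_interval A a b -> c <= a /\ b <= e.
Proof.
  intros Hce [Hab [HA _]]. split; apply Rnot_lt_le; intros Hout.
  - pose proof (Hce _ (HA ((a + Rmin b c) / 2) ltac:(unfold Rmin; destruct Rle_dec; lra))).
    revert H; unfold Rmin; destruct Rle_dec; lra.
  - pose proof (Hce _ (HA ((b + Rmax a e) / 2) ltac:(unfold Rmax; destruct Rle_dec; lra))).
    revert H; unfold Rmax; destruct Rle_dec; lra.
Qed.

Lemma max_open_intervals_finite c e h : 0 < h -> (forall t, A t -> c < t < e) ->
  (forall a b, max_open_interval A a b -> a <> c -> b <> e -> h < b - a) ->
  exists L, forall a b, max_open_interval A a b -> In (a, b) L.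
Proof.
  intros Hh Hce Hlong.
  destruct (list_of_subsingleton
    (fun p => max_open_interval A (fst p) (snd p) /\ fst p = c)) as [Lc HLc].
  { intros [a b] [a' b'] [H Ha] [H' Ha']; simpl in *; subst a a'.
    f_equal. exact (max_open_interval_eq_left _ _ _ H H'). }
  destruct (list_of_subsingleton
    (fun p => max_open_interval A (fst p) (snd p) /\ snd p = e)) as [Le HLe].
  { intros [a b] [a' b'] [H Hb] [H' Hb']; simpl in *; subst b b'.
    f_equal. exact (max_open_interval_eq_right _ _ _ H H'). }
  destruct (nfloor_ex (Rmax 0 ((e - c) / h))) as [N [_ HN]]; [apply Rmax_l|].
  destruct (list_of_finite_union (fun n p => max_open_interval A (fst p) (snd p) /\
      fst p < c + INR n * h < snd p) (S N)) as [Lg HLg].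
  { intros n. apply list_of_subsingleton. intros [a b] [a' b'] [H Hg] [H' Hg']; simpl in *.
    destruct (max_open_interval_eq _ _ _ _ _ H H' Hg Hg') as [-> ->]; reflexivity. }
  exists (Lc ++ Le ++ Lg). intros a b Hab.
  destruct (max_open_interval_bounds c e a b Hce Hab) as [Hca Hbe].
  apply in_or_app. destruct (Req_dec a c) as [Hac|Hac].
  { left. apply (HLc (a, b)). split; assumption. }
  right. apply in_or_app. destruct (Req_dec b e) as [Hbe'|Hbe'].
  { left. apply (HLe (a, b)). split; assumption. }
  right. destruct (grid_point_between c h a b Hh Hca (Hlong a b Hab Hac Hbe')) as [n Hn].
  apply (HLg n (a, b)); [|split; assumption].
  apply INR_lt. rewrite S_INR.
  assert (INR n < (e - c) / h) by (apply Rlt_div_r; lra).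
  pose proof (Rmax_r 0 ((e - c) / h)). lra.
Qed.

Hypothesis A_open : Rtopology.open_set A.

Lemma max_open_interval_right_end a b : max_open_interval A a b -> ~ A b.
Proof.
  intros [Hab [HA Hmax]] Hb. destruct (open_set_ball A b A_open Hb) as [eta [Heta Hball]].
  enough (b + eta / 2 = b) by lra.
  apply (Hmax a (b + eta / 2)); try lra. intros t Ht. destruct (Rlt_dec t b).
  - apply HA. lra.
  - apply Hball, Rabs_def1; lra.
Qed.

Lemma max_open_interval_left_end a b : max_open_interval A a b -> ~ A a.
Proof.
  intros [Hab [HA Hmax]] Ha. destruct (open_set_ball A a A_open Ha) as [eta [Heta Hball]].
  enough (a - eta / 2 = a) by lra.
  apply (Hmax (a - eta / 2) b); try lra. intros t Ht. destruct (Rlt_dec a t).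
  - apply HA. lra.
  - apply Hball, Rabs_def1; lra.
Qed.

Lemma max_open_interval_absorb a b l m : max_open_interval A a b -> a < l < b ->
  (forall t, Rmin l m <= t <= Rmax l m -> A t) -> a < m < b.
Proof.
  intros Hmax Hl Hseg.
  pose proof (max_open_interval_left_end a b Hmax) as Ha.
  pose proof (max_open_interval_right_end a b Hmax) as Hb.
  split; apply Rnot_le_lt; intros Hm; [apply Ha | apply Hb];
    apply Hseg; unfold Rmin, Rmax; destruct Rle_dec; lra.
Qed.

End MaximalIntervals.

Definition sublevel (c e : R) (f : R -> R) (k l : R) : Prop :=
  c < l < e /\ Rabs (f l) < k.

Section TransversalFunction.

Variables (c e k D : R) (f df : R -> R).
Hypothesis k_pos : 0 < k.
Hypothesis f_derive : forall t, c <= t <= e -> is_derive f t (df t).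
Hypothesis df_bound : forall t, c <= t <= e -> Rabs (df t) <= D.
Hypothesis df_transversal : forall t, c <= t <= e -> Rabs (f t) <= k -> k <= Rabs (df t).

Lemma f_continuity t : c <= t <= e -> continuity_pt f t.
Proof.
  intros Ht. apply continuity_pt_filterlim.
  exact (ex_derive_continuous f t (ex_intro _ (df t) (f_derive t Ht))).
Qed.

Lemma mean_value u v : c <= u <= e -> c <= v <= e ->
  exists z, Rmin u v <= z <= Rmax u v /\ f u - f v = df z * (u - v).
Proof.
  intros Hu Hv. destruct (MVT_gen f v u df) as [z [Hz E]].
  - intros t Ht. apply f_derive, (segment_sub c e v u); [exact Hv | exact Hu | lra].
  - intros t Ht. apply f_continuity, (segment_sub c e v u t Hv Hu Ht).
  - exists z. rewrite Rmin_comm, Rmax_comm. split; [exact Hz | exact E].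
Qed.

Lemma Rabs_sub_le_lipschitz u v : c <= u <= e -> c <= v <= e ->
  Rabs (f u - f v) <= D * Rabs (u - v).
Proof.
  intros Hu Hv. destruct (mean_value u v Hu Hv) as [z [Hz ->]].
  rewrite Rabs_mult. apply Rmult_le_compat_r; [apply Rabs_pos|].
  exact (df_bound z (segment_sub c e u v z Hu Hv Hz)).
Qed.

Lemma Rabs_sub_ge_transversal u v : c <= u <= e -> c <= v <= e ->
  (forall t, Rmin u v <= t <= Rmax u v -> Rabs (f t) <= k) ->
  k * Rabs (u - v) <= Rabs (f u - f v).
Proof.
  intros Hu Hv Hsmall. destruct (mean_value u v Hu Hv) as [z [Hz ->]].
  rewrite Rabs_mult. apply Rmult_le_compat_r; [apply Rabs_pos|].
  exact (df_transversal z (segment_sub c e u v z Hu Hv Hz) (Hsmall z Hz)).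
Qed.

Lemma sublevel_open : Rtopology.open_set (sublevel c e f k).
Proof.
  apply open_set_of_ball. intros t [Ht Hft].
  destruct (continuity_pt_ball f t (k - Rabs (f t))) as [eta [Heta Hnear]];
    [apply f_continuity; lra | lra |].
  exists (Rmin eta (Rmin (t - c) (e - t))). split.
  - repeat apply Rmin_glb_lt; lra.
  - intros u Hu. pose proof (Rmin_l eta (Rmin (t - c) (e - t))).
    pose proof (Rmin_r eta (Rmin (t - c) (e - t))).
    pose proof (Rmin_l (t - c) (e - t)). pose proof (Rmin_r (t - c) (e - t)).
    pose proof (Hnear u ltac:(lra)). apply Rabs_def2 in Hu.
    pose proof (Rabs_triang_inv (f u) (f t)). unfold sublevel. repeat split; lra.
Qed.

Lemma sublevel_k_le_D t : sublevel c e f k t -> k <= D.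
Proof.
  intros [Ht Hft].
  apply (Rle_trans _ (Rabs (df t))); [apply df_transversal | apply df_bound]; lra.
Qed.

Lemma max_interval_bounds a b : max_open_interval (sublevel c e f k) a b -> c <= a /\ b <= e.
Proof. apply max_open_interval_bounds. intros t Ht. exact (proj1 Ht). Qed.

Lemma max_interval_D_pos a b : max_open_interval (sublevel c e f k) a b -> 0 < D.
Proof.
  intros [Hab [Hin _]]. apply (Rlt_le_trans _ k); [exact k_pos|].
  apply (sublevel_k_le_D ((a + b) / 2)), Hin. lra.
Qed.

Lemma max_interval_abs_le a b : max_open_interval (sublevel c e f k) a b ->
  forall t, a <= t <= b -> Rabs (f t) <= k.
Proof.
  intros Hm. pose proof (max_interval_bounds a b Hm).
  destruct Hm as [Hab [Hin _]].
  apply (le_on_closed_interval (fun t => Rabs (f t))); [exact Hab | |].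
  - intros t Ht. apply (continuity_pt_comp f Rabs); [apply f_continuity; lra|].
    apply Rcontinuity_abs.
  - intros t Ht. apply Rlt_le, (Hin t Ht).
Qed.

Lemma max_interval_left_abs a b : max_open_interval (sublevel c e f k) a b ->
  c < a -> Rabs (f a) = k.
Proof.
  intros Hm Hca. pose proof (max_interval_bounds a b Hm).
  pose proof (proj1 Hm).
  apply Rle_antisym; [apply (max_interval_abs_le a b Hm); lra|].
  apply Rnot_lt_le. intros Hlt.
  apply (max_open_interval_left_end _ sublevel_open a b Hm). split; [lra | exact Hlt].
Qed.

Lemma max_interval_right_abs a b : max_open_interval (sublevel c e f k) a b ->
  b < e -> Rabs (f b) = k.
Proof.
  intros Hm Hbe. pose proof (max_interval_bounds a b Hm).
  pose proof (proj1 Hm).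
  apply Rle_antisym; [apply (max_interval_abs_le a b Hm); lra|].
  apply Rnot_lt_le. intros Hlt.
  apply (max_open_interval_right_end _ sublevel_open a b Hm). split; [lra | exact Hlt].
Qed.

Lemma max_interval_Rabs_sub_ge a b u v : max_open_interval (sublevel c e f k) a b ->
  a <= u <= b -> a <= v <= b -> k * Rabs (u - v) <= Rabs (f u - f v).
Proof.
  intros Hm Hu Hv. pose proof (max_interval_bounds a b Hm).
  apply Rabs_sub_ge_transversal; [lra | lra |].
  intros t Ht. exact (max_interval_abs_le a b Hm t (segment_sub a b u v t Hu Hv Ht)).
Qed.

Lemma max_interval_length_le_2 a b : max_open_interval (sublevel c e f k) a b -> b - a <= 2.
Proof.
  intros Hm. pose proof (proj1 Hm).
  pose proof (max_interval_Rabs_sub_ge a b b a Hm ltac:(lra) ltac:(lra)) as Hvar.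
  rewrite Rabs_right in Hvar by lra.
  pose proof (max_interval_abs_le a b Hm a ltac:(lra)).
  pose proof (max_interval_abs_le a b Hm b ltac:(lra)).
  pose proof (Rabs_triang (f b) (- f a)) as Htri.
  rewrite Rabs_Ropp in Htri. fold (f b - f a) in Htri.
  apply (Rmult_le_reg_l k); [exact k_pos | lra].
Qed.

Lemma max_interval_length_ge a b : max_open_interval (sublevel c e f k) a b ->
  c < a -> b < e -> 2 * (k / D) <= b - a.
Proof.
  intros Hm Hca Hbe. pose proof (max_interval_D_pos a b Hm) as HD.
  pose proof (max_interval_bounds a b Hm). pose proof (proj1 Hm).
  pose proof (max_interval_Rabs_sub_ge a b b a Hm ltac:(lra) ltac:(lra)) as Hlow.
  pose proof (Rabs_sub_le_lipschitz b a ltac:(lra) ltac:(lra)) as Hup.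
  rewrite (Rabs_right (b - a)) in Hlow, Hup by lra.
  pose proof (max_interval_left_abs a b Hm Hca) as Ha.
  pose proof (max_interval_right_abs a b Hm Hbe) as Hb.
  assert (0 < k * (b - a)) by (apply Rmult_lt_0_compat; lra).
  (* [f] moves between values of modulus [k] by a positive amount, so it changes sign *)
  assert (Rabs (f b - f a) = 2 * k).
  { revert Hlow Ha Hb. unfold Rabs. repeat destruct Rcase_abs; lra. }
  replace (2 * (k / D)) with (2 * k / D) by (field; lra).
  apply Rle_div_l; lra.
Qed.

Lemma max_interval_length_gt a b : max_open_interval (sublevel c e f k) a b ->
  a <> c -> b <> e -> k / D < b - a.
Proof.
  intros Hm Hac Hbe. pose proof (max_interval_D_pos a b Hm).
  pose proof (max_interval_bounds a b Hm).
  destruct (Rdichotomy _ _ Hac), (Rdichotomy _ _ Hbe); try lra.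
  pose proof (max_interval_length_ge a b Hm ltac:(lra) ltac:(lra)).
  assert (0 < k / D) by (apply Rdiv_lt_0_compat; lra). lra.
Qed.

Lemma max_interval_argmin a b : max_open_interval (sublevel c e f k) a b ->
  exists lj, a <= lj <= b /\
    forall l, a <= l <= b -> Rabs (f lj) <= Rabs (f l) /\ k * Rabs (l - lj) <= Rabs (f l).
Proof.
  intros Hm. pose proof (max_interval_bounds a b Hm).
  pose proof (proj1 Hm).
  assert (Hcont : forall t, a <= t <= b -> continuity_pt f t)
    by (intros; apply f_continuity; lra).
  destruct (Rtopology.continuity_ab_min (fun t => Rabs (f t)) a b) as [lj [Hmin Hlj]]; [lra| |].
  { intros t Ht. apply (continuity_pt_comp f Rabs); [apply Hcont, Ht | apply Rcontinuity_abs]. }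
  exists lj. split; [exact Hlj|]. intros l Hl. split; [exact (Hmin l Hl)|].
  (* a sign change on [a, b] would give a zero of [f], hence [f lj = 0] by minimality *)
  assert (Hsame : 0 <= f l * f lj).
  { apply Rnot_lt_le. intros Hneg.
    destruct (root_of_sign_change f (Rmin l lj) (Rmax l lj)) as [z [Hz Hz0]].
    - apply (Rle_trans _ l); [apply Rmin_l | apply Rmax_l].
    - intros t Ht. apply Hcont, (segment_sub a b l lj); assumption.
    - unfold Rmin, Rmax. destruct Rle_dec; nra.
    - pose proof (Hmin z (segment_sub a b l lj z Hl Hlj Hz)) as Hzmin.
      rewrite Hz0, Rabs_R0 in Hzmin. pose proof (Rabs_pos (f lj)).
      assert (f lj = 0) by (apply Rabs_eq_0; lra). nra. }
  pose proof (max_interval_Rabs_sub_ge a b l lj Hm Hl Hlj) as Hvar.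
  pose proof (Hmin l Hl) as Hle. cbv beta in Hle.
  assert (Rabs (f l - f lj) <= Rabs (f l)); [|lra].
  revert Hle Hsame. unfold Rabs. repeat destruct Rcase_abs; nra.
Qed.

Lemma max_interval_near_argmin a b lj : max_open_interval (sublevel c e f k) a b ->
  a <= lj <= b -> (forall l, a <= l <= b -> Rabs (f lj) <= Rabs (f l)) ->
  k / 2 <= Rabs (f lj) ->
  forall l, Rabs (l - lj) < k / (2 * D) -> c <= l <= e -> k / 2 <= Rabs (f l).
Proof.
  intros Hm Hlj Hmin Hhalf l Hl Hle.
  pose proof (max_interval_bounds a b Hm).
  pose proof (max_interval_D_pos a b Hm) as HD.
  (* outside [a, b], [f] cannot lose [k / 2] from its value [k] at the nearest endpoint *)
  assert (Hstep : D * Rabs (l - lj) < k / 2).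
  { apply (Rlt_le_trans _ (D * (k / (2 * D)))); [apply Rmult_lt_compat_l; lra|].
    right. field. lra. }
  destruct (Rle_dec a l) as [Hal|Hal]; [destruct (Rle_dec l b) as [Hlb|Hlb]|].
  - pose proof (Hmin l (conj Hal Hlb)). lra.
  - pose proof (max_interval_right_abs a b Hm ltac:(lra)).
    pose proof (Rabs_sub_le_lipschitz b l ltac:(lra) Hle).
    pose proof (Rabs_triang_inv (f b) (f l)).
    rewrite (Rabs_left (b - l)) in * by lra. rewrite (Rabs_right (l - lj)) in Hstep by lra.
    assert (D * - (b - l) <= D * (l - lj)) by (apply Rmult_le_compat_l; lra). lra.
  - pose proof (max_interval_left_abs a b Hm ltac:(lra)).
    pose proof (Rabs_sub_le_lipschitz a l ltac:(lra) Hle).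
    pose proof (Rabs_triang_inv (f a) (f l)).
    rewrite (Rabs_right (a - l)) in * by lra. rewrite (Rabs_left (l - lj)) in Hstep by lra.
    assert (D * (a - l) <= D * - (l - lj)) by (apply Rmult_le_compat_l; lra). lra.
Qed.

Lemma max_interval_absorb_near a b l : max_open_interval (sublevel c e f k) a b ->
  a < l < b -> Rabs (f l) <= k / 2 ->
  forall m, Rabs (m - l) < k / (2 * D) -> c < m < e -> a < m < b.
Proof.
  intros Hm Hl Hfl m Hml Hme.
  pose proof (max_interval_bounds a b Hm).
  pose proof (max_interval_D_pos a b Hm) as HD.
  apply (max_open_interval_absorb _ sublevel_open a b l m Hm Hl).
  intros t Ht.
  assert (Htce : c < t < e) by (revert Ht; unfold Rmin, Rmax; destruct Rle_dec; lra).
  split; [exact Htce|].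
  rewrite Rmin_comm, Rmax_comm in Ht.
  pose proof (Rabs_le_between_min_max m l t Ht).
  pose proof (Rabs_sub_le_lipschitz t l ltac:(lra) ltac:(lra)).
  pose proof (Rabs_triang_inv (f t) (f l)).
  assert (D * Rabs (t - l) <= D * Rabs (m - l)) by (apply Rmult_le_compat_l; lra).
  assert (D * Rabs (m - l) < k / 2); [|lra].
  apply (Rlt_le_trans _ (D * (k / (2 * D)))); [apply Rmult_lt_compat_l; lra|].
  right. field. lra.
Qed.

Lemma sublevel_structure :
  (forall l, sublevel c e f k l ->
     exists a b, max_open_interval (sublevel c e f k) a b /\ a < l < b) /\
  (exists L : list (R * R),
     forall a b, max_open_interval (sublevel c e f k) a b -> In (a, b) L) /\
  forall a b, max_open_interval (sublevel c e f k) a b ->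
    (b - a <= 2 /\ (a <> c -> b <> e -> k / D <= b - a)) /\
    (exists lj, a <= lj <= b /\
       (forall l, a <= l <= b ->
          Rabs (f l) >= Rabs (f lj) /\ Rabs (f l) >= k * Rabs (l - lj)) /\
       (Rabs (f lj) >= k / 2 ->
          forall l, Rabs (l - lj) < k / (2 * D) -> c <= l <= e -> Rabs (f l) >= k / 2)) /\
    (forall l, a < l < b -> Rabs (f l) <= k / 2 ->
       forall m, Rabs (m - l) < k / (2 * D) -> c < m < e -> a < m < b).
Proof.
  assert (Hbounds : forall t, sublevel c e f k t -> c < t < e)
    by (intros t Ht; exact (proj1 Ht)).
  split; [exact (max_open_interval_of_open _ c e sublevel_open Hbounds)|].
  split.
  { destruct (Rlt_dec 0 D) as [HD|HD].
    - apply (max_open_intervals_finite _ c e (k / D)); [apply Rdiv_lt_0_compat; lra| |].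
      + exact Hbounds.
      + exact max_interval_length_gt.
    - exists nil. intros a b Hm. pose proof (max_interval_D_pos a b Hm). lra. }
  intros a b Hm. split; [split|split].
  - exact (max_interval_length_le_2 a b Hm).
  - intros Hac Hbe. apply Rlt_le, (max_interval_length_gt a b Hm Hac Hbe).
  - destruct (max_interval_argmin a b Hm) as [lj [Hlj Hmin]].
    exists lj. split; [exact Hlj|]. split.
    + intros l Hl. destruct (Hmin l Hl). split; apply Rle_ge; assumption.
    + intros Hhalf l Hl Hle. apply Rle_ge, (max_interval_near_argmin a b lj Hm Hlj);
        [intros t Ht; apply Hmin, Ht | apply Rge_le, Hhalf | exact Hl | exact Hle].
  - intros l. exact (max_interval_absorb_near a b l Hm).
Qed.

End TransversalFunction.

Lemma cpt_sub_segment ja jb c e : (forall l, c <= l <= e -> inJ ja jb l) ->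
  cpt_sub ja jb (fun l => c <= l <= e).
Proof. intros HIJ. split; [apply Rtopology.compact_P3 | exact HIJ]. Qed.

Lemma is_derive_Phi {Omega : Type} (d : Omega -> Omega -> R) pi ja jb x y t :
  smooth_in_lambda pi ja jb -> inJ ja jb t ->
  is_derive (fun l => Phi d pi l x y) t (Derive (fun l => Phi d pi l x y) t).
Proof.
  intros Hsmooth Ht. apply Derive_correct. unfold Phi.
  apply ex_derive_mult; [|apply ex_derive_const].
  apply (ex_derive_minus (fun l => pi l x) (fun l => pi l y));
    [exact (Hsmooth x t Ht 1%nat) | exact (Hsmooth y t Ht 1%nat)].
Qed.

Lemma regular_Derive_Phi_bound {Omega : Type} (d : Omega -> Omega -> R) pi ja jb tau K :
  regular d pi ja jb tau -> cpt_sub ja jb K ->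
  exists D1, 0 < D1 /\ forall l x y, K l -> x <> y ->
    Rabs (Derive (fun t => Phi d pi t x y) l) <= D1 / Rpower (d x y) tau.
Proof.
  intros Hreg HK. destruct (Hreg K HK 1%nat) as [C HC].
  exists (Rmax C 1). split; [apply (Rlt_le_trans _ 1); [lra | apply Rmax_r]|].
  intros l x y Hl Hxy. pose proof (HC l x y Hl Hxy) as Hbound. simpl in Hbound.
  replace (- (1) * tau) with (- tau) in Hbound by ring.
  rewrite Rpower_Ropp in Hbound. apply (Rle_trans _ _ _ Hbound).
  apply Rmult_le_compat_r; [left; apply Rinv_0_lt_compat, exp_pos | apply Rmax_l].
Qed.

Theorem lemmaA1 (Omega : Type) (d : Omega -> Omega -> R) (ja jb : Rbar)
  (pi : R -> Omega -> R) (tau : R)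
  (Hd : is_metric d) (Hcpt : metric_compact d) (HJ : Rbar_lt ja jb)
  (Hcont : cont_in_x d pi ja jb) (Hsmooth : smooth_in_lambda pi ja jb)
  (Htau : 0 <= tau < 1)
  (Htrans : transversal d pi ja jb tau) (Hreg : regular d pi ja jb tau)
  (c e : R) (Hce : c < e) (HIJ : forall l, c <= l <= e -> inJ ja jb l)
  (delta : R) (Hdelta : transversal_const d pi tau (fun l => c <= l <= e) delta) :
  exists C eps : R, 0 < C /\ 0 < eps /\
  forall x y : Omega, x <> y ->
  let r := d x y in
  let S := fun l => c < l < e /\ Rabs (Phi d pi l x y) < delta * Rpower r tau in
  (* S is the union of its maximal open intervals, of which there are finitely many *)
  (forall l, S l -> exists a b, max_open_interval S a b /\ a < l < b) /\
  (exists L : list (R * R), forall a b, max_open_interval S a b -> In (a, b) L) /\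
  forall a b, max_open_interval S a b ->
    (* (i) *)
    (b - a <= 2 /\ (a <> c -> b <> e -> C * Rpower r (2 * tau) <= b - a)) /\
    (* (ii) *)
    (exists lj, a <= lj <= b /\
       (forall l, a <= l <= b ->
          Rabs (Phi d pi l x y) >= Rabs (Phi d pi lj x y) /\
          Rabs (Phi d pi l x y) >= delta * Rpower r tau * Rabs (l - lj)) /\
       (* (b) *)
       (Rabs (Phi d pi lj x y) >= delta * Rpower r tau / 2 ->
          forall l, Rabs (l - lj) < eps * Rpower r (2 * tau) -> c <= l <= e ->
            Rabs (Phi d pi l x y) >= delta * Rpower r tau / 2)) /\
    (* (a) *)
    (forall l, a < l < b -> Rabs (Phi d pi l x y) <= delta * Rpower r tau / 2 ->
       forall m, Rabs (m - l) < eps * Rpower r (2 * tau) -> c < m < e -> a < m < b).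
Proof.
  destruct Hdelta as [Hdelta_pos Hdelta_trans].
  destruct (regular_Derive_Phi_bound d pi ja jb tau _ Hreg (cpt_sub_segment ja jb c e HIJ))
    as [D1 [HD1 Hbound]].
  exists (delta / D1), (delta / (2 * D1)).
  split; [apply Rdiv_lt_0_compat; lra|]. split; [apply Rdiv_lt_0_compat; lra|].
  intros x y Hxy r S.
  assert (Hrho : 0 < Rpower r tau) by apply exp_pos.
  assert (Hr2 : Rpower r (2 * tau) = Rpower r tau * Rpower r tau)
    by (rewrite <- Rpower_plus; f_equal; ring).
  (* with [k = delta r^tau] and [D = D1 / r^tau]:
     [C r^(2 tau) = k / D] and [eps r^(2 tau) = k / (2 D)] *)
  replace (delta / D1 * Rpower r (2 * tau))
    with (delta * Rpower r tau / (D1 / Rpower r tau)) by (rewrite Hr2; field; lra).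
  replace (delta / (2 * D1) * Rpower r (2 * tau))
    with (delta * Rpower r tau / (2 * (D1 / Rpower r tau))) by (rewrite Hr2; field; lra).
  apply (sublevel_structure c e _ _ (fun l => Phi d pi l x y)
    (Derive (fun l => Phi d pi l x y))).
  - apply Rmult_lt_0_compat; assumption.
  - intros t Ht. exact (is_derive_Phi d pi ja jb x y t Hsmooth (HIJ t Ht)).
  - intros t Ht. exact (Hbound t x y Ht Hxy).
  - intros t Ht Hsmall. apply Rge_le, (Hdelta_trans t x y Ht Hxy Hsmall).
Qed.
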